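(* Let $(X,f)$ be a dynamical system. The following are equivalent: (1) $(X,f)$ is $\Delta$-transitive; (2) $(X,f)$ is $\mathcal{F}[\infty]$-point transitive; (3) $Trans_{\mathcal{F}[\infty]}(X,f)$ is residual in $X$.
   Context: A dynamical system is a pair $(X,f)$ with $X$ a compact metric space and $f:X\to X$ continuous. $\mathbb{N}=\{1,2,\dots\}$, $\mathbb{Z}_+=\{0,1,2,\dots\}$. $N(x,U)=\{n\in\mathbb{N}: f^n(x)\in U\}$. For a family $\mathcal{F}$ of subsets of $\mathbb{N}$, $x$ is an $\mathcal{F}$-transitive point if $N(x,U)\in\mathcal{F}$ for every non-empty open $U\subset X$; $Trans_{\mathcal{F}}(X,f)$ is the set of such points; $(X,f)$ is $\mathcal{F}$-point transitive if it is non-empty. For a system $(Y,g)$, $y$ is a transitive point if its $\omega$-limit set equals $Y$. $(X,f)$ is $\Delta$-transitive if for every $n\in\mathbb{N}$ there is $x\in X$ such that $(x,\dots,x)$ is a transitive point of $(X^n,f\times f^2\times\dots\times f^n)$. For $\mathbf{a}=(a_1,\dots,a_r)\in\mathbb{N}^r$, $\mathcal{F}[\mathbf{a}]$ is the collection of all $F\subset\mathbb{N}$ such that for every $(n_1,\dots,n_r)\in\mathbb{Z}_+^r$ there is $k\in\mathbb{N}$ with $ka_i+n_i\in F$ for all $i$; $\mathcal{F}[\infty]=\bigcap_{i=1}^\infty\mathcal{F}[(1,2,\dots,i)]$. *)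

From Stdlib Require Import Reals List Arith.
Open Scope R_scope.

Section Metric.
Context {X : Type} (d : X -> X -> R).

Definition is_metric : Prop :=
  (forall x y, 0 <= d x y) /\
  (forall x y, d x y = 0 <-> x = y) /\
  (forall x y, d x y = d y x) /\
  (forall x y z, d x z <= d x y + d y z).

Definition open_set (U : X -> Prop) : Prop :=
  forall x, U x -> exists eps, 0 < eps /\ forall y, d x y < eps -> U y.

Definition compact_metric : Prop :=
  forall (I : Type) (U : I -> X -> Prop),
    (forall i, open_set (U i)) -> (forall x, exists i, U i x) ->
    exists l : list I, forall x, exists i, In i l /\ U i x.

Definition continuous_map (f : X -> X) : Prop :=
  forall x eps, 0 < eps -> exists delta, 0 < delta /\
    forall y, d x y < delta -> d (f x) (f y) < eps.

Definition dense_set (A : X -> Prop) : Prop :=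
  forall U, open_set U -> (exists x, U x) -> exists x, U x /\ A x.

Definition residual_set (A : X -> Prop) : Prop :=
  exists V : nat -> X -> Prop,
    (forall k, open_set (V k) /\ dense_set (V k)) /\
    (forall x, (forall k, V k x) -> A x).

Definition iter (f : X -> X) (n : nat) (x : X) : X := Nat.iter n f x.

Definition hitting (f : X -> X) (x : X) (U : X -> Prop) : nat -> Prop :=
  fun n => (1 <= n)%nat /\ U (iter f n x).

(** Delta-transitivity: for every n >= 1 there is x such that (x,...,x) is a
    transitive point of (X^n, f x f^2 x ... x f^n), i.e. its omega-limit set
    is all of X^n.  With the (max) product metric, z = (z_1,...,z_n) is in
    the omega-limit set of (x,...,x) iff for every eps > 0 and every N there
    is m >= N with d(f^{i m}(x), z_i) < eps for all 1 <= i <= n.  Points of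
    X^n are represented as functions nat -> X (only indices 1..n matter). *)
Definition omega_limit_diag (f : X -> X) (n : nat) (x : X) (z : nat -> X) : Prop :=
  forall eps, 0 < eps -> forall N : nat, exists m : nat, (N <= m)%nat /\
    forall i, (1 <= i <= n)%nat -> d (iter f (i * m) x) (z i) < eps.

Definition Delta_transitive (f : X -> X) : Prop :=
  forall n : nat, (1 <= n)%nat ->
    exists x : X, forall z : nat -> X, omega_limit_diag f n x z.

Definition F_transitive_point (Fam : (nat -> Prop) -> Prop) (f : X -> X) (x : X) : Prop :=
  forall U, open_set U -> (exists y, U y) -> Fam (hitting f x U).

End Metric.

Definition F_a (a : list nat) (F : nat -> Prop) : Prop :=
  forall n : nat -> nat, exists k : nat, (1 <= k)%nat /\
    forall i, (i < length a)%nat -> F (k * nth i a 0 + n i)%nat.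

Definition F_inf (F : nat -> Prop) : Prop :=
  forall i : nat, (1 <= i)%nat -> F_a (seq 1 i) F.

(** - (2) -> (1): an F[infinity]-transitive point [x] is itself Delta-
      transitive of every order [n].  To approach [(z_1, ..., z_n)] pick
      times [p_i] with [f^(p_i) x] near [z_i], then apply the F[(1,..,n)]
      property to the open set [W = {y | f^(p_i) y near z_i}] with shifts
      [i c - p_i]; the resulting [k] gives [f^(i (k + c)) x] near [z_i].
    - (1) -> (3): a Delta-transitive point of order 1 has a dense orbit, so
      the balls [B(f^p x1, 1/(q+1))] form a countable base.  For such a
      ball [B], a length [r] and a coded shift vector [s], the "pattern set"
      [{y | exists k, forall j < r, f^(k (j+1) + s_j) y \in B}] is open and,
      by Delta-transitivity of order [r + 1], dense.  A point lying in all
      of these countably many sets is F[infinity]-transitive.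
    - (3) -> (2): the Baire category theorem for compact metric spaces,
      proved via nested closed balls. *)

From Pilot Require Import Defs.
From Stdlib Require Import Reals List Arith.
From Stdlib Require Import Lia Lra Cantor Classical ClassicalEpsilon.
(** Re-import so that [open_set] refers to the metric notion of [Defs], not
    to the homonymous one of the real-line topology in [Reals]. *)
Import Defs.
Open Scope R_scope.

Section MetricSpace.
Variables (X : Type) (d : X -> X -> R).
Hypothesis Hd : is_metric d.

Lemma dist_sym x y : d x y = d y x.
Proof. destruct Hd as (_ & _ & H & _). apply H. Qed.

Lemma dist_triangle x y z : d x z <= d x y + d y z.
Proof. destruct Hd as (_ & _ & _ & H). apply H. Qed.

Lemma dist_self x : d x x = 0.
Proof. destruct Hd as (_ & H & _). apply H; reflexivity. Qed.

Lemma open_ball c r : open_set d (fun y => d c y < r).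
Proof.
  intros x Hx. exists (r - d c x). split; [lra|].
  intros y Hy. pose proof (dist_triangle c x y). lra.
Qed.

Lemma open_ball_left c r : open_set d (fun y => d y c < r).
Proof.
  intros x Hx. rewrite dist_sym in Hx.
  destruct (open_ball c r x Hx) as (e & He & H).
  exists e. split; [exact He|]. intros y Hy. rewrite dist_sym. auto.
Qed.

Lemma open_inter (A B : X -> Prop) :
  open_set d A -> open_set d B -> open_set d (fun y => A y /\ B y).
Proof.
  intros HA HB x [Ax Bx].
  destruct (HA _ Ax) as (e1 & He1 & H1). destruct (HB _ Bx) as (e2 & He2 & H2).
  exists (Rmin e1 e2). split; [apply Rmin_glb_lt; auto|].
  intros y Hy. pose proof (Rmin_l e1 e2). pose proof (Rmin_r e1 e2).
  split; [apply H1 | apply H2]; lra.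
Qed.

Lemma open_finite_inter (U : nat -> X -> Prop) r :
  (forall i, (i < r)%nat -> open_set d (U i)) ->
  open_set d (fun y => forall i, (i < r)%nat -> U i y).
Proof.
  induction r as [|r IH]; intros HU.
  - intros x _. exists 1. split; [lra|]. intros y _ i Hi. lia.
  - assert (Ho : open_set d (fun y => (forall i, (i < r)%nat -> U i y) /\ U r y)).
    { apply open_inter; auto. }
    intros x Hx. destruct (Ho x) as (e & He & Hy); [split; auto|].
    exists e. split; [exact He|]. intros y Hdy i Hi. destruct (Hy y Hdy) as [Hlt Hr].
    destruct (Nat.eq_dec i r) as [->|Hne]; [exact Hr | apply Hlt; lia].
Qed.

Lemma open_union (U : nat -> X -> Prop) :
  (forall k, open_set d (U k)) -> open_set d (fun y => exists k, U k y).
Proof.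
  intros HU x [k Hk]. destruct (HU k x Hk) as (e & He & H).
  exists e. split; [exact He|]. intros y Hy. exists k. auto.
Qed.

Lemma open_preimage (U : X -> Prop) g :
  open_set d U -> continuous_map d g -> open_set d (fun y => U (g y)).
Proof.
  intros HU Hg x Hx. destruct (HU _ Hx) as (e & He & H).
  destruct (Hg x e He) as (e2 & He2 & H2). exists e2. split; auto.
Qed.

End MetricSpace.

Lemma finite_min_pos (g : nat -> R) n :
  (forall i, (i <= n)%nat -> 0 < g i) ->
  exists e, 0 < e /\ forall i, (i <= n)%nat -> e <= g i.
Proof.
  induction n as [|n IH]; intros Hg.
  - exists (g 0%nat). split; [apply Hg; lia|].
    intros i Hi. replace i with 0%nat by lia. lra.
  - destruct IH as (e & He & Hle); [intros i Hi; apply Hg; lia|].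
    exists (Rmin e (g (S n))). split; [apply Rmin_glb_lt; auto; apply Hg; lia|].
    intros i Hi. destruct (Nat.eq_dec i (S n)) as [->|Hne]; [apply Rmin_r|].
    pose proof (Rmin_l e (g (S n))). pose proof (Hle i ltac:(lia)). lra.
Qed.

Lemma finite_max (p : nat -> nat) n :
  exists M, forall i, (i <= n)%nat -> (p i <= M)%nat.
Proof.
  induction n as [|n [M HM]].
  - exists (p 0%nat). intros i Hi. replace i with 0%nat by lia. lia.
  - exists (Nat.max M (p (S n))). intros i Hi.
    destruct (Nat.eq_dec i (S n)) as [->|Hne]; [lia|].
    specialize (HM i ltac:(lia)). lia.
Qed.

Section Baire.
Variables (X : Type) (d : X -> X -> R) (x0 : X).
Hypothesis Hd : is_metric d.
Hypothesis Hc : compact_metric d.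

(** Cantor's intersection theorem for a decreasing sequence of closed balls:
    the complements of the balls are open, so if they covered [X] a finite
    subfamily would, which is impossible since the balls are nested. *)
Lemma nested_closed_balls_meet (c : nat -> X) (r : nat -> R) :
  (forall k, 0 < r k) ->
  (forall k w, d (c (S k)) w <= r (S k) -> d (c k) w <= r k) ->
  exists w, forall k, d (c k) w <= r k.
Proof.
  intros Hpos Hnest1.
  assert (Hnest : forall j k w, (k <= j)%nat -> d (c j) w <= r j -> d (c k) w <= r k).
  { induction j as [|j IH]; intros k w Hkj Hw.
    - replace k with 0%nat by lia. exact Hw.
    - destruct (Nat.eq_dec k (S j)) as [->|Hne]; [exact Hw|].
      apply IH; [lia | apply Hnest1; exact Hw]. }
  apply NNPP. intro Hempty.
  assert (Hcover : forall w, exists k, r k < d (c k) w).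
  { intro w. apply NNPP. intro Hw. apply Hempty. exists w. intro k.
    apply Rnot_lt_le. intro Hk. apply Hw. exists k. exact Hk. }
  assert (Hopen : forall k, open_set d (fun w => r k < d (c k) w)).
  { intros k w Hw. exists (d (c k) w - r k). split; [lra|]. intros y Hy.
    pose proof (dist_triangle X d Hd (c k) y w). rewrite (dist_sym X d Hd y w) in *. lra. }
  destruct (Hc nat _ Hopen Hcover) as [l Hl].
  set (M := list_max l).
  destruct (Hl (c M)) as (k & Hk & Hfar).
  assert (HkM : (k <= M)%nat).
  { apply (proj1 (Forall_forall _ l) (proj1 (list_max_le l M) (le_n _)) k Hk). }
  assert (Hcentre : d (c M) (c M) <= r M) by (rewrite dist_self; [left; apply Hpos | exact Hd]).
  pose proof (Hnest M k (c M) HkM Hcentre). lra.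
Qed.

Lemma closed_ball_in_dense_open (V : X -> Prop) c r :
  open_set d V -> dense_set d V -> 0 < r ->
  exists c' r', 0 < r' /\ forall w, d c' w <= r' -> d c w < r /\ V w.
Proof.
  intros HVo HVd Hr.
  assert (Hne : exists y, d c y < r) by (exists c; rewrite dist_self; [lra | exact Hd]).
  destruct (HVd _ (open_ball X d Hd c r) Hne) as (y & Hy & HVy).
  destruct (open_inter X d _ _ (open_ball X d Hd c r) HVo y (conj Hy HVy)) as (e & He & H).
  exists y, (e / 2). split; [lra|]. intros w Hw. apply H. lra.
Qed.

Lemma residual_nonempty (A : X -> Prop) : residual_set d A -> exists x, A x.
Proof.
  intros (V & HV & HA).
  assert (Hstep : forall ks : nat * (X * R), exists s' : X * R,
    0 < snd (snd ks) -> 0 < snd s' /\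
    forall w, d (fst s') w <= snd s' -> d (fst (snd ks)) w < snd (snd ks) /\ V (fst ks) w).
  { intros [k [c r]]. simpl. destruct (Rlt_dec 0 r) as [Hr|Hr].
    - destruct (closed_ball_in_dense_open (V k) c r (proj1 (HV k)) (proj2 (HV k)) Hr)
        as (c' & r' & H).
      exists (c', r'). intros _. exact H.
    - exists (c, r). intro. contradiction. }
  apply choice in Hstep as [step Hst].
  set (sq := fix sq (k : nat) : X * R :=
         match k with 0 => (x0, 1) | S k => step (k, sq k) end).
  assert (Hpos : forall k, 0 < snd (sq k)).
  { induction k as [|k IH]; simpl; [lra|]. apply (Hst (k, sq k)). exact IH. }
  destruct (nested_closed_balls_meet (fun k => fst (sq k)) (fun k => snd (sq k)) Hpos)
    as [w Hw].
  { intros k w Hw. destruct (Hst (k, sq k) (Hpos k)) as [_ H].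
    destruct (H w Hw) as [Hin _]. left. exact Hin. }
  exists w. apply HA. intro k. destruct (Hst (k, sq k) (Hpos k)) as [_ H].
  apply (H w (Hw (S k))).
Qed.

End Baire.

(** Coding of finite shift vectors by a single natural number: [s] is read
    as a stream of Cantor-paired entries. *)
Definition decode_tuple (s j : nat) : nat :=
  fst (of_nat (Nat.iter j (fun c => snd (of_nat c)) s)).

Lemma decode_tuple_surj r (n : nat -> nat) :
  exists s, forall j, (j < r)%nat -> decode_tuple s j = n j.
Proof.
  revert n. induction r as [|r IH]; intros n.
  - exists 0%nat. intros j Hj. lia.
  - destruct (IH (fun j => n (S j))) as [s' Hs'].
    exists (to_nat (n 0%nat, s')). intros [|j] Hj; unfold decode_tuple.
    + change (fst (of_nat (to_nat (n 0%nat, s'))) = n 0%nat).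
      rewrite cancel_of_to. reflexivity.
    + rewrite Nat.iter_succ_r, cancel_of_to. apply Hs'. lia.
Qed.

Section Dynamics.
Variables (X : Type) (d : X -> X -> R).
Hypothesis Hd : is_metric d.
Variable f : X -> X.
Hypothesis Hf : continuous_map d f.

Lemma iter_add a b x : iter f (a + b) x = iter f a (iter f b x).
Proof. unfold iter. apply Nat.iter_add. Qed.

Lemma iter_continuous n : continuous_map d (iter f n).
Proof.
  induction n as [|n IH]; intros x eps He.
  - exists eps. split; auto.
  - destruct (Hf (iter f n x) eps He) as (e1 & He1 & H1).
    destruct (IH x e1 He1) as (e2 & He2 & H2).
    exists e2. split; [exact He2|]. intros y Hy. apply H1, H2, Hy.
Qed.

Lemma open_preimage_iter (U : X -> Prop) n :
  open_set d U -> open_set d (fun y => U (iter f n y)).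
Proof. intro HU. apply open_preimage; [exact HU | apply iter_continuous]. Qed.

Lemma diagonal_visits_open_sets n x :
  (forall z, omega_limit_diag d f n x z) ->
  forall U : nat -> X -> Prop,
  (forall i, (1 <= i <= n)%nat -> open_set d (U i) /\ exists y, U i y) ->
  forall N, exists m, (N <= m)%nat /\
    forall i, (1 <= i <= n)%nat -> U i (iter f (i * m) x).
Proof.
  intros Hx U HU N.
  assert (Hballs : forall i, exists ze : X * R, 0 < snd ze /\
    ((1 <= i <= n)%nat -> forall y, d (fst ze) y < snd ze -> U i y)).
  { intro i. destruct (classic (1 <= i <= n)%nat) as [Hi|Hi].
    - destruct (HU i Hi) as [Ho [y Hy]]. destruct (Ho y Hy) as (e & He & H).
      exists (y, e). simpl. auto.
    - exists (x, 1). simpl. split; [lra | contradiction]. }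
  apply choice in Hballs as [ball Hball].
  destruct (finite_min_pos (fun i => snd (ball i)) n) as (e & He & Hle).
  { intros i _. apply Hball. }
  destruct (Hx (fun i => fst (ball i)) e He N) as (m & Hm & Hclose).
  exists m. split; [exact Hm|]. intros i Hi. apply (proj2 (Hball i) Hi).
  rewrite dist_sym by exact Hd.
  pose proof (Hclose i Hi). pose proof (Hle i ltac:(lia)). simpl in *. lra.
Qed.

Lemma F_inf_point_visits x U :
  F_transitive_point d F_inf f x -> open_set d U -> (exists y, U y) ->
  exists p, U (iter f p x).
Proof.
  intros Hx HU Hne.
  destruct (Hx U HU Hne 1%nat (le_n 1) (fun _ => 0%nat)) as (k & _ & Hk).
  destruct (Hk 0%nat ltac:(simpl; lia)) as [_ HUk]. eexists. exact HUk.
Qed.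

Lemma F_inf_point_Delta_transitive x :
  F_transitive_point d F_inf f x -> Delta_transitive d f.
Proof.
  intros Hx n Hn. exists x. intros z eps He N.
  assert (Happroach : forall i, exists p, d (iter f p x) (z i) < eps).
  { intro i. apply (F_inf_point_visits x (fun y => d y (z i) < eps));
      [exact Hx | apply open_ball_left; exact Hd|].
    exists (z i). rewrite dist_self by exact Hd. exact He. }
  apply choice in Happroach as [p Hp].
  destruct (finite_max p n) as [M HM].
  set (c := (N + M)%nat).
  set (W := fun y => forall i, (i < n)%nat -> d (iter f (p (S i)) y) (z (S i)) < eps).
  assert (HW : open_set d W).
  { apply open_finite_inter. intros i _.
    apply (open_preimage_iter (fun y => d y (z (S i)) < eps)), open_ball_left. exact Hd. }
  destruct (Hx W HW (ex_intro _ x (fun i _ => Hp (S i))) n Hn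
              (fun j => (S j * c - p (S j))%nat)) as (k & Hk & Hhit).
  exists (k + c)%nat. split; [unfold c; lia|].
  intros [|j] Hj; [lia|].
  destruct (Hhit j ltac:(rewrite length_seq; lia)) as [_ HWj].
  rewrite seq_nth in HWj by lia.
  specialize (HWj j ltac:(lia)). rewrite <- iter_add in HWj.
  assert (Hpc : (p (S j) <= c)%nat) by (pose proof (HM (S j) (proj2 Hj)); unfold c; lia).
  assert (Htime : (p (S j) + (k * (1 + j) + (S j * c - p (S j))) = S j * (k + c))%nat).
  { assert (p (S j) <= S j * c)%nat by nia. nia. }
  rewrite Htime in HWj. exact HWj.
Qed.

Definition orbit_ball (x1 : X) (p q : nat) : X -> Prop :=
  fun w => d (iter f p x1) w < / INR (S q).

Lemma orbit_balls_base x1 :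
  (forall z, omega_limit_diag d f 1 x1 z) ->
  forall U, open_set d U -> forall u, U u ->
  exists p q, forall w, orbit_ball x1 p q w -> U w.
Proof.
  intros Hx1 U HU u Hu. destruct (HU u Hu) as (e & He & HUe).
  destruct (archimed_cor1 (e / 2) ltac:(lra)) as (q & Hq & Hq0).
  destruct (diagonal_visits_open_sets 1 x1 Hx1 (fun _ w => d u w < / INR q))
    with (N := 0%nat)
    as (m & _ & Hm).
  { intros i _. split; [apply open_ball; exact Hd|]. exists u.
    rewrite dist_self by exact Hd. apply Rinv_0_lt_compat, lt_0_INR. lia. }
  specialize (Hm 1%nat ltac:(lia)). rewrite Nat.mul_1_l in Hm.
  exists m, (q - 1)%nat. intros w Hw. apply HUe. unfold orbit_ball in Hw.
  replace (S (q - 1)) with q in Hw by lia.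
  pose proof (dist_triangle X d Hd u (iter f m x1) w). lra.
Qed.

Definition pattern_set (B : X -> Prop) (r s : nat) : X -> Prop :=
  fun y => exists k, forall j, (j < r)%nat ->
    B (iter f (S k * S j + decode_tuple s j) y).

Lemma pattern_set_open B r s : open_set d B -> open_set d (pattern_set B r s).
Proof.
  intro HB. apply open_union. intro k. apply open_finite_inter.
  intros j _. apply open_preimage_iter. exact HB.
Qed.

(** Delta-transitivity of order [r + 1] makes every pattern set dense:
    a Delta-transitive point visits [U] at time [m] and the preimages
    [f^(-s_j) B] at times [(j + 2) m]. *)
Lemma pattern_set_dense B r s :
  Delta_transitive d f -> open_set d B -> (exists c, B c) ->
  dense_set d (pattern_set B r s).
Proof.
  intros HD HB HBne U HU HUne.
  destruct (HD (S r) ltac:(lia)) as [x Hx].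
  set (W := fun j y => B (iter f (decode_tuple s j) y)).
  assert (HWne : forall j, exists y, W j y).
  { intro j. destruct (diagonal_visits_open_sets (S r) x Hx (fun _ => B))
      with (N := decode_tuple s j) as (m & Hm & Hvisit).
    { intros i _. split; [exact HB | exact HBne]. }
    specialize (Hvisit 1%nat ltac:(lia)). rewrite Nat.mul_1_l in Hvisit.
    exists (iter f (m - decode_tuple s j) x). unfold W. rewrite <- iter_add.
    replace (decode_tuple s j + (m - decode_tuple s j))%nat with m by lia. exact Hvisit. }
  set (targets := fun i => match i with 0 | 1 => U | S (S j) => W j end).
  destruct (diagonal_visits_open_sets (S r) x Hx targets) with (N := 1%nat)
    as (m & Hm & Hvisit).
  { intros [|[|j]] Hi; simpl; [lia | split; assumption |].
    split; [apply open_preimage_iter; exact HB | apply HWne]. }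
  exists (iter f m x). split.
  - specialize (Hvisit 1%nat ltac:(lia)). rewrite Nat.mul_1_l in Hvisit. exact Hvisit.
  - exists (m - 1)%nat. intros j Hj. specialize (Hvisit (S (S j)) ltac:(lia)).
    simpl targets in Hvisit. unfold W in Hvisit. rewrite <- !iter_add in *.
    replace (S (m - 1) * S j + decode_tuple s j + m)%nat
      with (decode_tuple s j + S (S j) * m)%nat by nia.
    exact Hvisit.
Qed.

Lemma pattern_sets_F_inf_point (Bs : nat -> nat -> X -> Prop) y :
  (forall U, open_set d U -> forall u, U u -> exists p q, forall w, Bs p q w -> U w) ->
  (forall p q r s, pattern_set (Bs p q) r s y) ->
  F_transitive_point d F_inf f y.
Proof.
  intros Hbase Hy U HU [u Hu] i Hi n.
  destruct (Hbase U HU u Hu) as (p & q & Hpq).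
  destruct (decode_tuple_surj i n) as [s Hs].
  destruct (Hy p q i s) as (k & Hk).
  exists (S k). split; [lia|]. intros j Hj. rewrite length_seq in Hj.
  rewrite seq_nth by exact Hj. split; [nia|].
  apply Hpq. rewrite <- (Hs j Hj). replace (S k * (1 + j))%nat with (S k * S j)%nat by lia.
  apply Hk. exact Hj.
Qed.

Lemma Delta_transitive_residual :
  Delta_transitive d f -> residual_set d (F_transitive_point d F_inf f).
Proof.
  intros HD. destruct (HD 1%nat (le_n 1)) as [x1 Hx1].
  set (V := fun t => let '(p, t1) := of_nat t in let '(q, t2) := of_nat t1 in
            let '(r, s) := of_nat t2 in pattern_set (orbit_ball x1 p q) r s).
  exists V. split.
  - intro t. unfold V.
    destruct (of_nat t) as [p t1]. destruct (of_nat t1) as [q t2].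
    destruct (of_nat t2) as [r s].
    assert (HB : open_set d (orbit_ball x1 p q)) by (apply open_ball; exact Hd).
    split; [apply pattern_set_open; exact HB|].
    apply pattern_set_dense; [exact HD | exact HB|].
    exists (iter f p x1). unfold orbit_ball. rewrite dist_self by exact Hd.
    apply Rinv_0_lt_compat, lt_0_INR. lia.
  - intros y Hy. apply (pattern_sets_F_inf_point (orbit_ball x1)).
    + apply orbit_balls_base. exact Hx1.
    + intros p q r s. specialize (Hy (to_nat (p, to_nat (q, to_nat (r, s))))).
      unfold V in Hy. rewrite !cancel_of_to in Hy. exact Hy.
Qed.

End Dynamics.

Theorem theorem5p7 (X : Type) (d : X -> X -> R) (x0 : X)
  (Hd : is_metric d) (Hc : compact_metric d) (f : X -> X) (Hf : continuous_map d f) :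
  (Delta_transitive d f <-> exists x, F_transitive_point d F_inf f x) /\
  ((exists x, F_transitive_point d F_inf f x) <->
     residual_set d (F_transitive_point d F_inf f)).
Proof.
  pose proof (Delta_transitive_residual X d Hd f Hf) as Delta_residual.
  pose proof (residual_nonempty X d x0 Hd Hc (F_transitive_point d F_inf f))
    as residual_point.
  pose proof (fun x => F_inf_point_Delta_transitive X d Hd f Hf x) as point_Delta.
  split; split.
  - intro HD. apply residual_point, Delta_residual, HD.
  - intros [x Hx]. exact (point_Delta x Hx).
  - intros [x Hx]. exact (Delta_residual (point_Delta x Hx)).
  - exact residual_point.
Qed.
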